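(* Let $n\ge1$, $\omega\ge1$, and let $\mathcal{R}_\omega(\mathcal{C}^*_{n,A})$ be the set of regions of $\mathcal{C}^*_{n,A}$ of level $\omega$. For $\Omega\in\mathcal{R}_\omega(\mathcal{C}^*_{n,A})$, the graph $G_1(\Omega)$ has exactly $\omega$ connected components, which can be uniquely listed as $D_1,\dots,D_\omega$ so that $x_j-x_i>a_1$ whenever $i\in D_u$, $j\in D_v$, $u<v$ (for any $\bm x\in\Omega$); let $\Omega_j$ be the region of $\mathcal{C}^*_{D_j,A}$ containing the restriction $(x_i)_{i\in D_j}$. Then $\phi_\omega(\Omega)=(\Omega_1,\dots,\Omega_\omega)$ is independent of $\bm x\in\Omega$, each $\Omega_j$ has level 1, and \[\phi_\omega:\mathcal{R}_\omega(\mathcal{C}^*_{n,A})\longrightarrow\bigsqcup_{(D_1,\dots,D_\omega)}\mathcal{R}_1(\mathcal{C}^*_{D_1,A})\times\cdots\times\mathcal{R}_1(\mathcal{C}^*_{D_\omega,A})\] is a bijection, where the union is over all ordered set partitions $(D_1,\dots,D_\omega)$ of $[n]$ into $\omega$ nonempty blocks.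
   Context: Let $A=\{a_1,\dots,a_m\}$ with $a_1>\dots>a_m>0$. For a finite nonempty set $S$, $\mathcal{C}^*_{S,A}$ is the arrangement in $\mathbb{R}^S$ of hyperplanes $x_i-x_j=a_k$ ($i\ne j\in S$, $1\le k\le m$), and $\mathcal{C}^*_{n,A}=\mathcal{C}^*_{[n],A}$; for $|S|=1$ it is empty with unique region $\mathbb{R}^S$ of level 1. Regions are connected components of the complement; $\mathcal{R}_1(\cdot)$ denotes the set of regions of level 1. The level of $X\subseteq\mathbb{R}^S$ is the smallest integer $\ell\ge0$ such that there are a linear subspace $W$ of dimension $\ell$ and $r>0$ with $X\subseteq\{\bm x:\min_{\bm y\in W}\|\bm x-\bm y\|\le r\}$. $G_1(\Omega)$ is the graph on $[n]$ with $\{i,j\}$ an edge iff $|x_i-x_j|<a_1$ for $\bm x\in\Omega$. *)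

(* R : realType, points of R^T are
   functions T -> R with the (product = Euclidean, T finite) topology. *)
From HB Require Import structures.
From mathcomp Require Import all_boot all_order all_algebra.
From mathcomp Require Import boolp classical_sets reals topology normedtype.
Set Implicit Arguments. Unset Strict Implicit. Unset Printing Implicit Defensive.
Import Order.TTheory GRing.Theory Num.Theory.
Import numFieldNormedType.Exports.
Local Open Scope ring_scope.

(* The set A = {a_1 > ... > a_m > 0} is given as the strictly decreasing
   nonempty list A = [:: a_1; ...; a_m]; a_1 = head 0 A. *)
Definition valid_A (R : realType) (A : seq R) : Prop :=
  [/\ A != [::], sorted (fun x y => y < x) A & all (fun a => 0 < a) A].

Definition arr_compl (R : realType) (T : finType) (A : seq R) : set (T -> R) :=
  fun x => forall i j : T, i != j -> forall a, a \in A -> x i - x j != a.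

Definition is_region (R : realType) (T : finType) (A : seq R) (O : set (T -> R))
  : Prop :=
  exists2 x, arr_compl A x & O = @connected_component {ptws T -> R} (arr_compl A) x.

Definition eucl_norm (R : realType) (T : finType) (x : T -> R) : R :=
  Num.sqrt (\sum_(t : T) x t ^+ 2).

(* X lies within distance r of some linear subspace W of dimension l, where W
   is the span of l linearly independent vectors v_1..v_l
   (min_{y in W} |x - y| is attained, so "<= r" means some y in W is r-close) *)
Definition level_le (R : realType) (T : finType) (X : set (T -> R)) (l : nat)
  : Prop :=
  exists v : 'I_l -> T -> R,
    (forall c : 'I_l -> R,
        (forall t, \sum_(k < l) c k * v k t = 0) -> forall k, c k = 0) /\
    exists2 r : R, 0 < r &
      forall x, X x -> exists c : 'I_l -> R,
        eucl_norm (fun t => x t - \sum_(k < l) c k * v k t) <= r.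

Definition has_level (R : realType) (T : finType) (X : set (T -> R)) (l : nat)
  : Prop :=
  level_le X l /\ forall l', level_le X l' -> (l <= l')%N.

Definition G1 (R : realType) (n : nat) (A : seq R) (O : set ('I_n -> R))
  : rel 'I_n :=
  fun i j => `[< i != j /\ forall x, O x -> `|x i - x j| < head 0 A >].

Definition ordered_set_partition (n w : nat) (D : 'I_w -> {set 'I_n}) : Prop :=
  [/\ forall u, D u != finset.set0,
      forall u v, u != v -> [disjoint D u & D v]
    & forall i, exists u, i \in D u].

Definition ordered_components (R : realType) (n : nat) (A : seq R)
  (O : set ('I_n -> R)) (w : nat) (D : 'I_w -> {set 'I_n}) : Prop :=
  [/\ ordered_set_partition D,
      (forall i j, connect (G1 A O) i j <-> exists u, (i \in D u) && (j \in D u))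
    & forall (u v : 'I_w) i j x, O x -> (u < v)%N -> i \in D u -> j \in D v ->
        head 0 A < x j - x i].

Definition sub_idx (n : nat) (D : {set 'I_n}) : finType := {i : 'I_n | i \in D}.

Definition restr (R : realType) (n : nat) (D : {set 'I_n}) (x : 'I_n -> R)
  : sub_idx D -> R := fun k => x (val k).

Definition phi_rel (R : realType) (n : nat) (A : seq R) (O : set ('I_n -> R))
  (w : nat) (D : 'I_w -> {set 'I_n}) (P : forall u : 'I_w, set (sub_idx (D u) -> R))
  : Prop :=
  ordered_components A O D /\
  forall x, O x -> forall u, is_region A (P u) /\ P u (@restr R n (D u) x).
Arguments phi_rel {R n} A O {w} D P.

From HB Require Import structures.
From mathcomp Require Import all_boot all_order all_algebra.
From mathcomp Require Import boolp classical_sets reals topology normedtype.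
From mathcomp Require Import ring lra.
Import Order.TTheory GRing.Theory Num.Theory.
Import numFieldNormedType.Exports.
Set Implicit Arguments.
Unset Strict Implicit.
Unset Printing Implicit Defensive.
Local Open Scope ring_scope.

(* Regions of C*_{T,A} are its sign cells: the set of points on the same side
   as x of every hyperplane x_i - x_j = a.  A cell is convex, hence connected,
   and every difference x_i - x_j is continuous, so a connected subset of the
   complement never changes side.

   In a cell, |x_i - x_j| < a_1 does not depend on the point, and two points
   of different components of G_1 are more than a_1 apart; listing the k
   components from left to right therefore separates consecutive blocks by
   gaps larger than a_1 throughout the cell.  The level of the cell is k: it
   stays at bounded distance from the span of the k block indicators, since
   each block has diameter at most |T| a_1; conversely the cell is invariant
   under pushing any up-set of blocks further right, so every block indicator
   lies in the span of any subspace the cell stays close to.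

   A cell is determined by the order of
   its blocks together with the cells of its restrictions, and any choice of
   level-1 block cells is realised by translating the block points apart by
   more than a_1 plus their spreads. *)

Section ConvexCombination.
Variable R : realDomainType.

Lemma convex_comb_lt (p q a t : R) : 0 <= t <= 1 -> p < a -> q < a ->
  (1 - t) * p + t * q < a.
Proof.
move=> /andP[t0 t1] pa qa.
have h1 : (1 - t) * p <= (1 - t) * a by rewrite ler_wpM2l ?subr_ge0 // ltW.
have [->|t_gt0] := eqVneq t 0; first by rewrite subr0 !mul1r mul0r addr0.
have h2 : t * q < t * a by rewrite ltr_pM2l // lt0r t_gt0.
by have := ler_ltD h1 h2; rewrite -mulrDl subrK mul1r.
Qed.

Lemma convex_comb_neq (p q a t : R) : 0 <= t <= 1 -> p != a -> q != a ->
  (p < a) = (q < a) -> (1 - t) * p + t * q != a.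
Proof.
move=> t01 pa qa; case: (ltgtP p a) => [plt|pgt|/eqP]; last by rewrite (negPf pa).
  by move=> /esym qlt; rewrite lt_eqF // convex_comb_lt.
move=> /esym /negbT; rewrite -leNgt le_eqVlt eq_sym (negPf qa) /= => qgt.
have : (1 - t) * - p + t * - q < - a by apply: convex_comb_lt => //; rewrite ltrN2.
by rewrite !mulrN -opprD ltrN2 => /gt_eqF ->.
Qed.

End ConvexCombination.

Section Cells.
Local Open Scope classical_set_scope.
Variables (R : realType) (T : finType) (A : seq R).

Definition cell (x : T -> R) : set (T -> R) := fun y =>
  arr_compl A y /\ forall i j, i != j -> forall a, a \in A ->
    (y i - y j < a) = (x i - x j < a).

Lemma segment_continuous (x y : T -> R) :
  continuous (fun t : R => ((fun k => (1 - t) * x k + t * y k) : {ptws T -> R})).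
Proof.
move=> t; apply/cvg_sup => k; move: t.
apply/(@continuousP _ (initial_topology (@^~ k))) => _ [C oC <-].
apply: (@open_comp _ _ (fun t : R => (1 - t) * x k + t * y k)) => // s _.
apply: cvgD; apply: cvgMr_tmp; last exact: cvg_id.
by apply: cvgB; [exact: cvg_cst | exact: cvg_id].
Qed.

Lemma coord_diff_continuous (i j : T) :
  continuous (fun z : {ptws T -> R} => z i - z j).
Proof.
move=> z.
have pr k : (fun y : {ptws T -> R} => y k) @ z --> z k :=
  @proj_continuous T (fun _ => R) k z.
exact: cvgB (pr i) (pr j).
Qed.

Lemma connected_sign_constant (S : topologicalType) (C : set S) (g : S -> R)
  (a : R) : connected C -> continuous g -> (forall z, C z -> g z != a) ->
  forall p q, C p -> C q -> (g p < a) = (g q < a).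
Proof.
move=> Cc gc ga.
have gC : connected (g @` C).
  exact: connected_continuous_connected Cc (continuous_subspaceT gc).
have between p q : C p -> C q -> g p < a -> a < g q -> False.
  move=> Cp Cq gpa agq.
  have [z Cz gza] : (g @` C) a.
    apply: (iffLR (connected_intervalP _) gC (g p) (g q)); try exact: imageP.
    by rewrite (ltW gpa) (ltW agq).
  by move: (ga z Cz); rewrite gza eqxx.
move=> p q Cp Cq; have := ga p Cp; have := ga q Cq.
case: (ltgtP (g p) a) => hp; case: (ltgtP (g q) a) => hq //; try by move=> /eqP.
- by case: (between _ _ Cp Cq hp hq).
- by case: (between _ _ Cq Cp hq hp).
Qed.

Lemma component_sub_cell (x : T -> R) :
  connected_component (arr_compl A : set {ptws T -> R}) x `<=` cell x.
Proof.
move=> y [C [Cx CA Cc] Cy]; split; first exact: CA.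
move=> i j ij a aA.
have CAa z : C z -> z i - z j != a by move=> /CA; apply.
exact: (connected_sign_constant Cc (@coord_diff_continuous i j) CAa Cy Cx).
Qed.

Lemma cell_sub_component (x : T -> R) : arr_compl A x ->
  cell x `<=` connected_component (arr_compl A : set {ptws T -> R}) x.
Proof.
move=> xc y [yc xy].
pose gam t := ((fun k => (1 - t) * x k + t * y k) : {ptws T -> R}).
have gam0 : gam 0 = x by apply/funext => k; rewrite /gam subr0 mul0r addr0 mul1r.
have gam1 : gam 1 = y by apply/funext => k; rewrite /gam subrr mul0r add0r mul1r.
have in01 (t : R) : t = 0 \/ t = 1 -> `[0, 1] t.
  by case=> ->; rewrite /= in_itv /= ?lexx ler01.
exists (gam @` `[0, 1]); last by exists 1; [apply: in01; right | exact: gam1].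
split.
- by exists 0; [apply: in01; left | exact: gam0].
- move=> z [t]; rewrite /= in_itv /= => t01 <- i j ij a aA.
  have -> : gam t i - gam t j = (1 - t) * (x i - x j) + t * (y i - y j).
    by rewrite /gam; ring.
  by apply: convex_comb_neq => //; [exact: xc | exact: yc | rewrite xy].
- apply: connected_continuous_connected; first exact: segment_connected.
  exact/continuous_subspaceT/segment_continuous.
Qed.

Lemma region_cellP (O : set (T -> R)) :
  is_region A O <-> exists2 x, arr_compl A x & O = cell x.
Proof.
split; case=> x xc ->; exists x => //; apply/seteqP; split;
  by [exact: component_sub_cell | exact: cell_sub_component].
Qed.

Lemma cell_refl (x : T -> R) : arr_compl A x -> cell x x.
Proof. by split. Qed.

Lemma cell_eq (x y : T -> R) : cell x y -> cell y = cell x.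
Proof.
move=> [yc xy]; apply/funext => z; apply/propext.
by split=> -[zc zc']; split=> // i j ij a aA; rewrite zc' // xy.
Qed.

Lemma cell_gt (x y : T -> R) i j a : cell x y -> i != j -> a \in A ->
  a < x j - x i -> a < y j - y i.
Proof.
move=> [yc xy] ij aA h.
have ji : j != i by rewrite eq_sym.
have : ~~ (y j - y i < a) by rewrite xy // -leNgt ltW.
by rewrite -leNgt le_eqVlt eq_sym (negPf (yc j i ji a aA)).
Qed.

End Cells.

Section HeadOfA.
Variables (R : realType) (A : seq R).
Hypothesis hA : valid_A A.

Lemma head_in_A : head 0 A \in A.
Proof. by case: hA; case: A => // a s _ _ _; rewrite inE eqxx. Qed.

Lemma valid_A_gt0 a : a \in A -> 0 < a.
Proof. by case: hA => _ _ /allP; apply. Qed.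

Lemma valid_A_le_head a : a \in A -> a <= head 0 A.
Proof.
case: hA; case: A => // b s _ /= hs _.
rewrite inE => /orP[/eqP -> //|as_].
have tr : transitive (fun x y : R => y < x) by move=> ? ? ? h1 h2; exact: lt_trans h2 h1.
by move: (order_path_min tr hs) => /allP/(_ a as_)/ltW.
Qed.

Lemma head_gt0 : 0 < head 0 A.
Proof. exact: valid_A_gt0 head_in_A. Qed.

End HeadOfA.

Section Level.
Variables (R : realType) (T : finType).

Lemma coord_le_eucl_norm (q : T -> R) t : `|q t| <= eucl_norm q.
Proof.
rewrite /eucl_norm -sqrtr_sqr; apply: ler_wsqrtr.
by rewrite (bigD1 t) //= lerDl; apply: sumr_ge0 => s _; exact: sqr_ge0.
Qed.

Lemma eucl_norm_le_sum (q : T -> R) : eucl_norm q <= \sum_t `|q t|.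
Proof.
set S := \sum_t `|q t|.
have S0 : 0 <= S by apply: sumr_ge0.
have qS t : `|q t| <= S by rewrite /S (bigD1 t) //= lerDl; apply: sumr_ge0.
rewrite /eucl_norm -(ger0_norm S0) -sqrtr_sqr; apply: ler_wsqrtr.
apply: (@le_trans _ _ (\sum_t `|q t| * S)); last by rewrite -mulr_suml expr2.
by apply: ler_sum => t _; rewrite -real_normK ?num_real // expr2 ler_wpM2l.
Qed.

Lemma dot_le_eucl_norm (q z : T -> R) :
  `|\sum_t q t * z t| <= (\sum_t `|z t|) * eucl_norm q.
Proof.
apply: (le_trans (ler_norm_sum _ _ _)); rewrite mulr_suml; apply: ler_sum => t _.
by rewrite normrM mulrC ler_wpM2l // coord_le_eucl_norm.
Qed.

(* If a ray stays within bounded distance of span(v), its direction lies in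
   span(v): its inner product with every z orthogonal to span(v) must vanish,
   since along the ray that inner product grows linearly. *)
Lemma ray_orthogonal (O : set (T -> R)) l (v : 'I_l -> T -> R) (r : R)
  (cov : forall x, O x -> exists c : 'I_l -> R,
        eucl_norm (fun t => x t - \sum_(k < l) c k * v k t) <= r)
  (x h z : T -> R) :
  (forall s, 0 <= s -> O (fun t => x t + s * h t)) ->
  (forall k, \sum_t v k t * z t = 0) ->
  \sum_t h t * z t = 0.
Proof.
move=> ray vz; apply/eqP/negPn/negP => dn0.
set d := \sum_t h t * z t in dn0.
set Z := \sum_t `|z t|.
set X := \sum_t x t * z t.
have Z0 : 0 <= Z by apply: sumr_ge0.
have r0 : 0 <= r.
  by have [c] := cov _ (ray 0 (lexx 0)); apply: le_trans; exact: sqrtr_ge0.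
have d0 : 0 < `|d| by rewrite normr_gt0.
set s := (`|X| + Z * r + 1) / `|d|.
have s0 : 0 <= s by rewrite divr_ge0 // !addr_ge0 // mulr_ge0.
have [c hc] := cov _ (ray s s0).
set q := fun t => x t + s * h t - \sum_(k < l) c k * v k t.
have qz : \sum_t q t * z t = X + s * d.
  have -> : \sum_t q t * z t = \sum_t (x t * z t + s * (h t * z t))
      - \sum_t \sum_(k < l) c k * (v k t * z t).
    rewrite -sumrB; apply: eq_bigr => t _.
    rewrite /q mulrBl mulrDl mulr_suml mulrA; congr (_ + _ - _).
    by apply: eq_bigr => k _; rewrite mulrA.
  have -> : \sum_t \sum_(k < l) c k * (v k t * z t) = 0.
    by rewrite exchange_big big1 // => k _; rewrite -mulr_sumr vz mulr0.
  by rewrite subr0 big_split /= -mulr_sumr.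
have upper : `|X + s * d| <= Z * r.
  by rewrite -qz; apply: le_trans (dot_le_eucl_norm q z) _; apply: ler_wpM2l.
have sd : `|s * d| = `|X| + Z * r + 1.
  by rewrite normrM (ger0_norm s0) /s divfK // gt_eqF.
have := lerB_normD (s * d) X; rewrite sd [s * d + X]addrC => lower; lra.
Qed.

Lemma sum_enum_val (F : T -> R) : \sum_(j < #|T|) F (enum_val j) = \sum_t F t.
Proof.
rewrite (reindex (@enum_rank T)) /=; last by apply: onW_bij; exact: enum_rank_bij.
by apply: eq_bigr => t _; rewrite enum_rankK.
Qed.

Lemma indicators_in_span_card_le l k (v : 'I_l -> T -> R) (f : T -> 'I_k) :
  (forall u, exists i, f i = u) ->
  (forall z : T -> R, (forall kk, \sum_t v kk t * z t = 0) ->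
     forall u, \sum_t (f t == u)%:R * z t = 0) ->
  (k <= l)%N.
Proof.
move=> surj hb.
pose V : 'M[R]_(l, #|T|) := \matrix_(kk, j) v kk (enum_val j).
pose B : 'M[R]_(k, #|T|) := \matrix_(u, j) (f (enum_val j) == u)%:R.
have BV : (B <= V)%MS.
  rewrite submxE; apply/eqP/matrixP => u j'; rewrite !mxE.
  pose z t := cokermx V (enum_rank t) j'.
  have vz kk : \sum_t v kk t * z t = 0.
    transitivity ((V *m cokermx V) kk j'); last by rewrite mulmx_coker mxE.
    rewrite -(sum_enum_val (fun t => v kk t * z t)) mxE.
    by apply: eq_bigr => j _; rewrite /z enum_valK; congr (_ * _); rewrite mxE.
  transitivity (\sum_t (f t == u)%:R * z t); last exact: hb z vz u.
  rewrite -(sum_enum_val (fun t => (f t == u)%:R * z t)).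
  by apply: eq_bigr => j _; rewrite /z enum_valK; congr (_ * _); rewrite mxE.
have exs u : exists i, f i == u by have [i <-] := surj u; exists i.
pose rep u := xchoose (exs u).
have B_free : row_free B.
  apply/row_freeP; exists (\matrix_(j, u) (enum_val j == rep u)%:R).
  apply/matrixP => u u'; rewrite !mxE.
  rewrite (eq_bigr (fun j => (f (enum_val j) == u)%:R * (enum_val j == rep u')%:R));
    last by move=> j _; rewrite !mxE.
  rewrite (sum_enum_val (fun t => (f t == u)%:R * (t == rep u')%:R)).
  rewrite (bigD1 (rep u')) //= eqxx mulr1 big1 ?addr0 => [|t /negPf ->];
    last by rewrite mulr0.
  by rewrite (eqP (xchooseP (exs u'))) eq_sym.
move: B_free; rewrite /row_free => /eqP <-.
exact: leq_trans (mxrankS BV) (rank_leq_row V).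
Qed.

(* A block indicator is the difference of two up-set indicators, each of which
   lies in span(v) by [ray_orthogonal]. *)
Lemma level_le_ge_of_rays (O : set (T -> R)) (x : T -> R) k (f : T -> 'I_k) :
  (forall u, exists i, f i = u) ->
  (forall U : pred 'I_k, (forall u v : 'I_k, (u < v)%N -> U u -> U v) ->
      forall s, 0 <= s -> O (fun t => x t + s * (U (f t))%:R)) ->
  forall l, level_le O l -> (k <= l)%N.
Proof.
move=> surj ray l [v [_ [r _ cov]]].
apply: (indicators_in_span_card_le surj) => z vz u.
have ge_u := ray_orthogonal cov (ray (fun w => (u <= w)%N)
  (fun a b ab ua => leq_trans ua (ltnW ab))) vz.
have gt_u := ray_orthogonal cov (ray (fun w => (u < w)%N)
  (fun a b ab ua => ltn_trans ua ab)) vz.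
transitivity (\sum_t (u <= f t)%N%:R * z t - \sum_t (u < f t)%N%:R * z t);
  last by rewrite ge_u gt_u subrr.
rewrite -sumrB; apply: eq_bigr => t _; rewrite -mulrBl; congr (_ * _).
case: (ltngtP u (f t)) => [ut|tu|/val_inj <-]; last by rewrite eqxx subr0.
  by rewrite subrr -val_eqE gtn_eqF.
by rewrite subrr -val_eqE ltn_eqF.
Qed.

Lemma level_le_of_bounded_blocks (O : set (T -> R)) k (f : T -> 'I_k) (M : R) :
  (forall u, exists i, f i = u) -> 0 <= M ->
  (forall y, O y -> forall i j, f i = f j -> `|y i - y j| <= M) ->
  level_le O k.
Proof.
move=> surj M0 bd.
have exs u : exists i, f i == u by have [i <-] := surj u; exists i.
pose rep u := xchoose (exs u).
have frep u : f (rep u) = u by exact: eqP (xchooseP (exs u)).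
have blockE (c : 'I_k -> R) t : \sum_(u < k) c u * (f t == u)%:R = c (f t).
  rewrite (bigD1 (f t)) //= eqxx mulr1 big1 ?addr0 // => u /negPf.
  by rewrite eq_sym => ->; rewrite mulr0.
exists (fun u t => (f t == u)%:R); split.
  by move=> c hc u; rewrite -(frep u) -blockE hc.
exists (#|T|%:R * M + 1); first by rewrite ltr_wpDl ?mulr_ge0.
move=> y Oy; exists (fun u => y (rep u)).
apply: le_trans (eucl_norm_le_sum _) _.
apply: (@le_trans _ _ (\sum_(t : T) M)); last first.
  by rewrite sumr_const -[M *+ _]mulr_natl; apply: ler_wpDr; [exact: ler01 | exact: lexx].
by apply: ler_sum => t _; rewrite blockE bd ?frep.
Qed.

Lemma has_level_uniq (O : set (T -> R)) a b :
  has_level O a -> has_level O b -> a = b.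
Proof.
by move=> [ha ma] [hb mb]; apply/eqP; rewrite eqn_leq ma ?mb.
Qed.

End Level.

(* [graph1 A O] is [G1 A O] over an arbitrary finite index type; for
   [T = 'I_n] the two are convertible. *)
Definition graph1 (R : realType) (A : seq R) (T : finType) (O : set (T -> R))
  : rel T :=
  fun i j => `[< i != j /\ forall x, O x -> `|x i - x j| < head 0 A >].

Definition ranking (R : realType) (A : seq R) (T : finType) (O : set (T -> R))
  k (f : T -> 'I_k) : Prop :=
  [/\ forall u, exists i, f i = u,
      forall i j, connect (graph1 A O) i j <-> f i = f j
    & forall i j, (f i < f j)%N -> forall y, O y -> head 0 A < y j - y i].

Lemma surj_ord_homo_eq (T : Type) k (f g : T -> 'I_k) :
  (forall u, exists i, f i = u) -> (forall u, exists i, g i = u) ->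
  (forall i j, (f i < f j)%N -> (g i < g j)%N) ->
  (forall i j, (g i < g j)%N -> (f i < f j)%N) -> f = g.
Proof.
move=> sf sg fg gf.
suff fg_eq m i : nat_of_ord (f i) = m -> nat_of_ord (g i) = m.
  by apply/funext => i; apply: val_inj; symmetry; exact: fg_eq.
elim/ltn_ind: m i => m IH i fim.
case: (ltngtP (g i) m) => // h.
- have [j fj] := sf (g i).
  have fjm : (f j < m)%N by rewrite fj.
  have := IH _ fjm j erefl.
  have : (g j < g i)%N by apply: fg; rewrite fj fim.
  by move=> /[swap] ->; rewrite fj ltnn.
- have [j gj] := sg (Ordinal (ltn_trans h (ltn_ord (g i)))).
  have fji : (f j < f i)%N by apply: gf; rewrite gj.
  rewrite fim in fji.
  by have := IH _ fji j erefl; rewrite gj /= => e; rewrite -e ltnn in fji.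
Qed.

Section Rankings.
Variables (R : realType) (A : seq R).
Hypothesis hA : valid_A A.
Local Notation a1 := (head 0 A).
Variable T : finType.

Lemma graph1_cell (x : T -> R) i j : arr_compl A x ->
  graph1 A (cell A x) i j = (i != j) && (`|x i - x j| < a1).
Proof.
move=> xc; apply/asboolP/andP => [[ij /(_ x (cell_refl xc))]//|[ij xij]].
split=> // y [yc xy]; have ji : j != i by rewrite eq_sym.
move: xij; rewrite !ltr_norml => /andP[h1 h2]; apply/andP; split.
- by rewrite ltrNl opprB (xy j i ji _ (head_in_A hA)) -opprB -ltrNl.
- by rewrite (xy i j ij _ (head_in_A hA)).
Qed.

Lemma ranking_uniq (O : set (T -> R)) x k (f g : T -> 'I_k) :
  O x -> ranking A O f -> ranking A O g -> f = g.
Proof.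
move=> Ox hf hg; have a1_gt0 := head_gt0 hA.
have homo (f1 g1 : T -> 'I_k) : ranking A O f1 -> ranking A O g1 ->
    forall i j, (f1 i < f1 j)%N -> (g1 i < g1 j)%N.
  move=> [_ c1 o1] [_ c2 o2] i j h.
  case: (ltngtP (g1 i) (g1 j)) => // [h2|/val_inj/c2/c1 e].
  - by have := o1 _ _ h _ Ox; have := o2 _ _ h2 _ Ox; lra.
  - by rewrite e ltnn in h.
apply: surj_ord_homo_eq; [by case: hf | by case: hg | |];
  exact: homo.
Qed.

(* Shifting the blocks of an up-set to the right only moves differences that
   already exceed [a1] in absolute value, and it moves them away from zero. *)
Lemma upset_shift_diff (y : T -> R) k (f : T -> 'I_k) (U : pred 'I_k) s i j :
  (forall i j, (f i < f j)%N -> a1 < y j - y i) ->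
  (forall u v : 'I_k, (u < v)%N -> U u -> U v) -> 0 <= s ->
  let y' t := y t + s * (U (f t))%:R in
  [\/ y' i - y' j = y i - y j, a1 < y i - y j /\ a1 < y' i - y' j |
      y i - y j < - a1 /\ y' i - y' j < - a1].
Proof.
move=> sep up s0 /=; case Ui: (U (f i)); case Uj: (U (f j)); rewrite ?mulr1 ?mulr0.
- by apply: Or31; ring.
- have ji : (f j < f i)%N.
    case: (ltngtP (f i) (f j)) => [ij|//|/val_inj eq_ij].
    + by rewrite (up _ _ ij Ui) in Uj.
    + by rewrite -eq_ij Ui in Uj.
  by have := sep _ _ ji => h; apply: Or32; split; lra.
- have ij : (f i < f j)%N.
    case: (ltngtP (f i) (f j)) => [//|ji|/val_inj eq_ij].
    + by rewrite (up _ _ ji Uj) in Ui.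
    + by rewrite eq_ij Uj in Ui.
  by have := sep _ _ ij => h; apply: Or33; split; lra.
- by apply: Or31; ring.
Qed.

Lemma cell_upset_shift (x y : T -> R) k (f : T -> 'I_k) (U : pred 'I_k) s :
  (forall i j, (f i < f j)%N -> a1 < y j - y i) ->
  (forall u v : 'I_k, (u < v)%N -> U u -> U v) -> 0 <= s ->
  cell A x y -> cell A x (fun t => y t + s * (U (f t))%:R).
Proof.
move=> sep up s0 [yc xy].
set y' := fun t => _.
suff y'y i j a : i != j -> a \in A ->
    y' i - y' j != a /\ (y' i - y' j < a) = (y i - y j < a).
  by split=> i j ij a aA; have [y'a y'_lt] := y'y i j a ij aA; rewrite // y'_lt xy.
move=> ij aA; have a_gt0 := valid_A_gt0 hA aA; have a_le := valid_A_le_head hA aA.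
rewrite {}/y'; case: (upset_shift_diff i j sep up s0) => [->|[h h']|[h h']].
- by split=> //; exact: yc.
- have [ad ad'] : a < y i - y j /\ a < y i + s * (U (f i))%:R - (y j + s * (U (f j))%:R).
    by split; lra.
  by rewrite gt_eqF // !ltNge !ltW.
- have [da da'] : y i - y j < a /\ y i + s * (U (f i))%:R - (y j + s * (U (f j))%:R) < a.
    by split; lra.
  by rewrite lt_eqF // da da'.
Qed.

Lemma path_diff_le (O : set (T -> R)) y (p : seq T) t : O y ->
  path (graph1 A O) t p -> `|y t - y (last t p)| <= (size p)%:R * a1.
Proof.
move=> Oy; elim: p t => [|s p IH] t /=; first by rewrite subrr normr0 mul0r.
move=> /andP[/asboolP [_ /(_ y Oy) ts] /IH sp].
have -> : y t - y (last s p) = (y t - y s) + (y s - y (last s p)) by ring.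
rewrite -addn1 natrD mulrDl mul1r [_ * a1 + a1]addrC.
by apply: (le_trans (ler_normD _ _)); rewrite lerD // ltW.
Qed.

Lemma connect_diff_le (O : set (T -> R)) i j y : O y ->
  connect (graph1 A O) i j -> `|y i - y j| <= #|T|%:R * a1.
Proof.
move=> Oy /connectP [p pth ->]; case/shortenP: pth => p' pth' uq _.
apply: (le_trans (path_diff_le Oy pth')).
apply: ler_wpM2r; first exact: ltW (head_gt0 hA).
rewrite ler_nat.
by have := max_card (mem (i :: p')); rewrite (card_uniqP uq) /= => /ltnW.
Qed.

Lemma ranking_has_level (x : T -> R) k (f : T -> 'I_k) :
  arr_compl A x -> ranking A (cell A x) f -> has_level (cell A x) k.
Proof.
move=> xc [sf cf ofx]; split.
- apply: (level_le_of_bounded_blocks sf (M := #|T|%:R * a1)).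
    by apply: mulr_ge0 => //; exact: ltW (head_gt0 hA).
  by move=> y Oy i j /cf; exact: connect_diff_le.
- apply: (level_le_ge_of_rays (x := x) sf) => U Uup s s0.
  by apply: cell_upset_shift => // i j /ofx; apply; exact: cell_refl xc.
Qed.

End Rankings.

Section CellRanking.
Variables (R : realType) (A : seq R).
Hypothesis hA : valid_A A.
Local Notation a1 := (head 0 A).
Variables (T : finType) (x : T -> R).
Hypothesis xc : arr_compl A x.
Local Notation E := (graph1 A (cell A x)).

Let E_x i j : E i j = (i != j) && (`|x i - x j| < a1).
Proof. exact: graph1_cell. Qed.

Let connect_symE : connect_sym E.
Proof. by apply: sym_connect_sym => i j; rewrite !E_x eq_sym distrC. Qed.

Let neq_of_nconnect i j : ~~ connect E i j -> i != j.
Proof. by apply: contraNneq => ->; exact: connect0. Qed.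

(* As [x] avoids the hyperplane [x_j - x_i = a1], non-adjacent points are more
   than [a1] apart. *)
Lemma nconnect_apart i j : ~~ connect E i j -> x i < x j -> a1 < x j - x i.
Proof.
move=> nc lt; have ij := neq_of_nconnect nc.
have : ~~ E i j by apply: contra nc; exact: connect1.
rewrite E_x ij /= -leNgt distrC ger0_norm; last by rewrite subr_ge0 ltW.
rewrite le_eqVlt => /orP[/eqP a1E|//].
by have := xc (i := j) (j := i) _ (head_in_A hA); rewrite -a1E eqxx eq_sym ij => /(_ isT).
Qed.

Lemma nconnect_neq i j : ~~ connect E i j -> x i != x j.
Proof.
move=> nc; have ij := neq_of_nconnect nc.
apply/eqP => e; move/negP: nc; apply; apply: connect1.
by rewrite E_x ij e subrr normr0 head_gt0.
Qed.

Definition left_of i j := ~~ connect E i j && (x i < x j).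

Lemma left_of_connect_l i i' j : connect E i i' -> left_of i j -> left_of i' j.
Proof.
move=> /connectP [p pth ->] {i'}.
elim: p i pth => [|s p IH] i //= /andP[Eis pth] /andP[nc lt]; apply: IH => //.
have ncs : ~~ connect E s j.
  by apply: contra nc; apply: connect_trans; exact: connect1.
rewrite /left_of ncs; case: (ltrgtP (x s) (x j)) => // h.
- have := nconnect_apart nc lt.
  have := nconnect_apart (j := s) (i := j); rewrite connect_symE => /(_ ncs h).
  by move: Eis; rewrite E_x ltr_norml => /andP[_ /andP[]] *; lra.
- by move: (nconnect_neq ncs); rewrite h eqxx.
Qed.

Lemma left_of_connect_r i j j' : connect E j j' -> left_of i j -> left_of i j'.
Proof.
move=> jj' /andP[nc lt].
have nc' : ~~ connect E i j'.
  by apply: contra nc => ij'; apply: connect_trans ij' _; rewrite connect_symE.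
rewrite /left_of nc' /=; case: (ltrgtP (x i) (x j')) => // h.
- have : left_of j' i by rewrite /left_of connect_symE nc'.
  have j'j : connect E j' j by rewrite connect_symE.
  by move/(left_of_connect_l j'j) => /andP[_]; rewrite ltNge ltW.
- by move: (nconnect_neq nc'); rewrite h eqxx.
Qed.

Lemma left_of_total i j : ~~ connect E i j -> left_of i j || left_of j i.
Proof.
move=> nc; rewrite /left_of nc connect_symE nc /=.
by case: (ltrgtP (x i) (x j)) (nconnect_neq nc) => // ->; rewrite eqxx.
Qed.

Lemma left_of_trans i j k : left_of i j -> left_of j k -> left_of i k.
Proof.
move=> ij /andP[_ ltjk]; have /andP[_ ltij] := ij.
apply/andP; split; last exact: lt_trans ltjk.
apply/negP => /left_of_connect_l/(_ ij) /andP[_].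
by rewrite ltNge ltW.
Qed.

Lemma left_of_connect i j : connect E i j -> left_of i j = false.
Proof. by rewrite /left_of => ->. Qed.

Let roots := [set r | fingraph.root E r == r].

Let rank i := #|[set r in roots | left_of r i]|.

Let root_not_left i : fingraph.root E i \notin [set r in roots | left_of r i].
Proof. by rewrite inE left_of_connect ?andbF // connect_symE connect_root. Qed.

Let rank_lt i : (rank i < #|roots|)%N.
Proof.
apply: proper_card; apply/properP; split.
  by apply/fintype.subsetP => r; rewrite inE => /andP[].
exists (fingraph.root E i); last exact: root_not_left.
by rewrite inE (root_root connect_symE).
Qed.

Let rank_left_of i j : left_of i j -> (rank i < rank j)%N.
Proof.
move=> ij; apply: proper_card; apply/properP; split.
  apply/fintype.subsetP => r; rewrite !inE => /andP[-> ri] /=.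
  exact: left_of_trans ij.
exists (fingraph.root E i); last exact: root_not_left.
rewrite !inE (root_root connect_symE) eqxx /=.
by apply: left_of_connect_l ij; exact: connect_root.
Qed.

Let rank_eq i j : connect E i j <-> rank i = rank j.
Proof.
split=> [ij|e].
  apply: eq_card => r; rewrite !inE; case: (_ == r) => //=.
  by apply/idP/idP; apply: left_of_connect_r; rewrite // connect_symE.
apply/negPn/negP => /left_of_total/orP[]/rank_left_of; by rewrite e ltnn.
Qed.

Lemma cell_ranking_exists : exists k (f : T -> 'I_k), ranking A (cell A x) f.
Proof.
exists #|roots|; pose f i := Ordinal (rank_lt i); exists f.
have f_inj : {in roots &, injective f}.
  move=> r r' rS r'S /(congr1 val) /= /rank_eq rr'.
  move: rS r'S; rewrite !inE => /eqP <- /eqP <-; exact/(fingraph.rootP connect_symE).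
have f_onto : f @: roots = [set: 'I_#|roots|].
  apply/eqP; rewrite eqEcard finset.subsetT /= cardsT card_ord card_in_imset //.
split.
- move=> u; have : u \in f @: roots by rewrite f_onto inE.
  by case/imsetP => r _ ->; exists r.
- by move=> i j; rewrite rank_eq; split=> [e|/(congr1 val)//]; exact: val_inj.
- move=> i j /= ij y xy.
  have nc : ~~ connect E i j by apply/negP => /rank_eq e; rewrite e ltnn in ij.
  have /andP[_ lt] : left_of i j.
    case/orP: (left_of_total nc) => // /rank_left_of ji.
    by have := ltn_trans ij ji; rewrite ltnn.
  exact: cell_gt xy (neq_of_nconnect nc) (head_in_A hA) (nconnect_apart nc lt).
Qed.

End CellRanking.

Lemma homo_connect (T1 T2 : finType) (e1 : rel T1) (e2 : rel T2) (h : T1 -> T2) :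
  {homo h : a b / e1 a b >-> e2 a b} ->
  {homo h : a b / connect e1 a b >-> connect e2 a b}.
Proof.
move=> e12 a _ /connectP [p pth ->]; elim: p a pth => [|c p IH] a /=.
  by move=> _; exact: connect0.
by case/andP => /e12 hac /IH; apply: connect_trans; exact: connect1.
Qed.

Lemma connect_invariant (T : finType) (e : rel T) (U : Type) (g : T -> U) :
  (forall a b, e a b -> g a = g b) -> forall a b, connect e a b -> g a = g b.
Proof.
move=> eg a _ /connectP [p pth ->]; elim: p a pth => [|c p IH] a //=.
by case/andP => /eg -> /IH.
Qed.

Lemma connect_sub_lift (T : finType) (D : {set T}) (e : rel T)
  (e' : rel {t : T | t \in D}) :
  (forall a b, e a b -> a \in D -> b \in D) ->
  (forall s s' : {t : T | t \in D}, e (val s) (val s') -> e' s s') ->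
  forall s b (bD : b \in D), connect e (val s) b -> connect e' s (exist _ b bD).
Proof.
move=> closedD ee' s b bD /connectP [p pth eb].
elim: p s pth b bD eb => [|c p IH] s /=.
  by move=> _ b bD eb; apply: eq_connect0; apply: val_inj; rewrite /= eb.
case/andP => esc pth b bD eb; have cD := closedD _ _ esc (valP s).
apply: connect_trans (connect1 (ee' s (exist _ c cD) esc)) _; exact: IH.
Qed.

Section Blocks.
Variables (R : realType) (A : seq R) (n : nat).

Lemma restr_cell (D : {set 'I_n}) (x y : 'I_n -> R) :
  cell A x y -> cell A (restr (D := D) x) (restr (D := D) y).
Proof.
case=> yc xy; have vn (s s' : sub_idx D) : s != s' -> val s != val s' by [].
by split=> s s' /vn ss' a aA; [exact: yc | exact: xy].
Qed.

Lemma ranking_ordered_components w (O : set ('I_n -> R)) (g : 'I_n -> 'I_w)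
  (D : 'I_w -> {set 'I_n}) :
  ranking A O g -> (forall u i, (i \in D u) = (g i == u)) ->
  ordered_components A O D.
Proof.
move=> [sg cg og] Dg; split.
- split.
  + by move=> u; apply/set0Pn; have [i gi] := sg u; exists i; rewrite Dg gi.
  + move=> u v uv; apply/pred0P => i /=; apply/negbTE; rewrite !Dg.
    by apply: contra uv => /andP[/eqP <-].
  + by move=> i; exists (g i); rewrite Dg.
- move=> i j; rewrite cg; split=> [e|[u]]; first by exists (g i); rewrite !Dg e eqxx.
  by rewrite !Dg => /andP[/eqP -> /eqP ->].
- by move=> u v i j y Oy uv; rewrite !Dg => /eqP gi /eqP gj; apply: og; rewrite ?gi ?gj.
Qed.

Lemma ordered_set_partition_index w (D : 'I_w -> {set 'I_n}) :
  ordered_set_partition D ->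
  exists g : 'I_n -> 'I_w,
    (forall u, exists i, g i = u) /\ forall u i, (i \in D u) = (g i == u).
Proof.
move=> [ne dj cov]; pose g i := xchoose (cov i).
have gi i : i \in D (g i) by exact: xchooseP (cov i).
have Dg u i : (i \in D u) = (g i == u).
  apply/idP/eqP => [iu|<-//]; apply/eqP/negPn/negP => /dj /disjointFr /(_ (gi i)).
  by rewrite iu.
exists g; split=> // u.
by have /set0Pn [i iu] := ne u; exists i; apply/eqP; rewrite -Dg.
Qed.

Lemma ordered_components_ranking w (O : set ('I_n -> R)) (D : 'I_w -> {set 'I_n}) :
  ordered_components A O D ->
  exists g : 'I_n -> 'I_w, ranking A O g /\ forall u i, (i \in D u) = (g i == u).
Proof.
move=> [/ordered_set_partition_index [g [g_onto Dg]] cc oo].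
exists g; split => //; split => // [i j|i j ij y Oy].
- rewrite cc; split=> [[u]|e]; last by exists (g i); rewrite !Dg e eqxx.
  by rewrite !Dg => /andP[/eqP -> /eqP ->].
- by apply: (oo (g i) (g j) i j y Oy ij); rewrite Dg.
Qed.

End Blocks.

Section Phi.
Variables (R : realType) (A : seq R).
Hypothesis hA : valid_A A.
Local Notation a1 := (head 0 A).
Variables (n w : nat).

Lemma block_cell_has_level1 (x : 'I_n -> R) k (f : 'I_n -> 'I_k) u :
  arr_compl A x -> ranking A (cell A x) f ->
  has_level (cell A (restr (D := [set i | f i == u]) x)) 1.
Proof.
set D := [set i | f i == u]; move=> xc [sf cf _].
have [rc _] := restr_cell D (cell_refl xc).
apply: (ranking_has_level hA (f := fun _ => ord0) rc); split.
- move=> v; rewrite (ord1 v); have [i fi] := sf u.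
  have iD : i \in D by rewrite inE fi.
  by exists (exist _ i iD).
- move=> s [j jD]; split=> // _.
  have sj : connect (graph1 A (cell A x)) (val s) j.
    by apply/cf; move: (valP s) jD; rewrite !inE => /eqP -> /eqP ->.
  apply: (connect_sub_lift _ _ jD sj) => [a b /connect1/cf ab|t t'].
    by rewrite !inE ab.
  by rewrite (graph1_cell hA _ _ xc) (graph1_cell hA _ _ rc).
- by move=> s s'; rewrite ltnn.
Qed.

Lemma phi_well_defined (O : set ('I_n -> R)) :
  is_region A O -> has_level O w ->
  exists D : 'I_w -> {set 'I_n},
    ordered_components A O D /\
    (forall D' : 'I_w -> {set 'I_n}, ordered_components A O D' -> D' = D) /\
    exists P : forall u : 'I_w, set (sub_idx (D u) -> R),
      phi_rel A O D P /\ forall u, has_level (P u) 1.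
Proof.
move=> /region_cellP [x xc ->] O_w.
have [k [f f_rank]] := cell_ranking_exists hA xc.
have k_w := has_level_uniq (ranking_has_level hA xc f_rank) O_w; subst k.
pose D u := [set i | f i == u].
have Df u i : (i \in D u) = (f i == u) by rewrite inE.
exists D; split; first exact: ranking_ordered_components f_rank Df.
split.
  move=> D' /ordered_components_ranking [g [g_rank D'g]].
  have gf := ranking_uniq hA (cell_refl xc) g_rank f_rank.
  by apply/funext => u; apply/setP => i; rewrite D'g Df gf.
exists (fun u => cell A (restr (D := D u) x)); split.
  split; first exact: ranking_ordered_components f_rank Df.
  move=> y xy u; split; last exact: restr_cell.
  apply/region_cellP; exists (restr (D := D u) x) => //.
  by case: (restr_cell (D u) (cell_refl xc)).
by move=> u; exact: block_cell_has_level1.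
Qed.

Lemma cell_eq_of_blocks (x1 x2 : 'I_n -> R) (g : 'I_n -> 'I_w)
  (D : 'I_w -> {set 'I_n}) :
  arr_compl A x1 -> arr_compl A x2 ->
  ranking A (cell A x1) g -> ranking A (cell A x2) g ->
  (forall u i, (i \in D u) = (g i == u)) ->
  (forall u, cell A (restr (D := D u) x1) (restr (D := D u) x2)) ->
  cell A x1 x2.
Proof.
move=> x1c x2c [_ _ sep1] [_ _ sep2] Dg blocks; split=> // i j ij a aA.
have a_gt0 := valid_A_gt0 hA aA; have a_le := valid_A_le_head hA aA.
case: (ltngtP (g i) (g j)) => gij.
- have := sep1 _ _ gij _ (cell_refl x1c); have := sep2 _ _ gij _ (cell_refl x2c).
  move=> h2 h1; have d2 : x2 i - x2 j < a by lra.
  have d1 : x1 i - x1 j < a by lra.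
  by rewrite d1 d2.
- have := sep1 _ _ gij _ (cell_refl x1c); have := sep2 _ _ gij _ (cell_refl x2c).
  move=> h2 h1; have d2 : a < x2 i - x2 j by lra.
  have d1 : a < x1 i - x1 j by lra.
  by rewrite !ltNge !ltW.
- have iD : i \in D (g i) by rewrite Dg.
  have jD : j \in D (g i) by rewrite Dg (val_inj gij).
  have [_ /(_ (exist _ i iD) (exist _ j jD))] := blocks (g i).
  by apply => //; rewrite -val_eqE.
Qed.

Lemma phi_injective (O1 O2 : set ('I_n -> R)) (D : 'I_w -> {set 'I_n})
  (P : forall u : 'I_w, set (sub_idx (D u) -> R)) :
  is_region A O1 -> is_region A O2 -> phi_rel A O1 D P -> phi_rel A O2 D P ->
  O1 = O2.
Proof.
move=> /region_cellP [x1 x1c ->] /region_cellP [x2 x2c ->] [oc1 P1] [oc2 P2].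
have [g1 [rank1 Dg1]] := ordered_components_ranking oc1.
have [g2 [rank2 Dg2]] := ordered_components_ranking oc2.
have g12 : g1 = g2 by apply/funext => i; apply/eqP; rewrite -Dg1 Dg2.
subst g2; apply/esym/cell_eq/(cell_eq_of_blocks x1c x2c rank1 rank2 Dg1) => u.
have [/region_cellP [p _ Pu] Px1] := P1 x1 (cell_refl x1c) u.
have [_ Px2] := P2 x2 (cell_refl x2c) u.
by rewrite Pu in Px1 Px2; rewrite (cell_eq Px1).
Qed.

Section Glue.
Variables (D : 'I_w -> {set 'I_n}) (block : 'I_n -> 'I_w).
Hypothesis D_block : forall u i, (i \in D u) = (block i == u).
Variable p : forall u : 'I_w, sub_idx (D u) -> R.
Arguments p : clear implicits.
Hypothesis p_compl : forall u, arr_compl A (p u).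
Arguments p_compl : clear implicits.
Variables (L : R) (x : 'I_n -> R).
Hypothesis L_gap : forall u v (s : sub_idx (D u)) (t : sub_idx (D v)),
  `|p u s| + `|p v t| + a1 < L.
Hypothesis x_blocks : forall u (s : sub_idx (D u)), x (val s) = p u s + L * u%:R.

Let block_mem i : i \in D (block i). Proof. by rewrite D_block. Qed.

Let x_block i : x i = p (block i) (exist _ i (block_mem i)) + L * (block i)%:R.
Proof. exact: x_blocks (exist _ i (block_mem i)). Qed.

Lemma glue_gap i j : (block i < block j)%N -> a1 < x j - x i.
Proof.
move=> ij; rewrite !x_block.
have := L_gap (exist _ i (block_mem i)) (exist _ j (block_mem j)).
set pi := p _ _; set pj := p _ _; move=> gap.
have L_gt0 : 0 < L.
  by apply: le_lt_trans gap; rewrite !addr_ge0 // ltW // head_gt0.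
have : L * (block i)%:R + L <= L * (block j)%:R.
  by rewrite -[X in _ + X]mulr1 -mulrDr ler_pM2l // natr1 ler_nat.
have := ler_norm pi; have := ler_norm (- pj); rewrite normrN => npj npi; lra.
Qed.

Lemma glue_diff_block u (s t : sub_idx (D u)) :
  x (val s) - x (val t) = p u s - p u t.
Proof. by rewrite !x_blocks; ring. Qed.

Lemma glue_compl : arr_compl A x.
Proof.
move=> i j ij a aA.
have a_gt0 := valid_A_gt0 hA aA; have a_le := valid_A_le_head hA aA.
case: (ltngtP (block i) (block j)) => h.
- by have := glue_gap h; apply: contraTneq => e; rewrite -leNgt; lra.
- by have := glue_gap h; apply: contraTneq => e; rewrite -leNgt; lra.
- have jD : j \in D (block i) by rewrite D_block (val_inj h).
  rewrite (glue_diff_block (exist _ i (block_mem i)) (exist _ j jD)).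
  by apply: p_compl => //; rewrite -val_eqE.
Qed.

Lemma glue_block_connect u (s t : sub_idx (D u)) :
  has_level (cell A (p u)) 1 -> connect (graph1 A (cell A x)) (val s) (val t).
Proof.
move=> lev; have [k [f f_rank]] := cell_ranking_exists hA (p_compl u).
have k1 := has_level_uniq (ranking_has_level hA (p_compl u) f_rank) lev; subst k.
have st : connect (graph1 A (cell A (p u))) s t.
  by case: f_rank => _ cf _; apply/cf; rewrite (ord1 (f s)) (ord1 (f t)).
apply: (homo_connect _ st) => a b.
rewrite (graph1_cell hA _ _ (p_compl u)) (graph1_cell hA _ _ glue_compl).
by rewrite glue_diff_block.
Qed.

Lemma glue_ranking : (forall u, exists i, block i = u) ->
  (forall u, has_level (cell A (p u)) 1) -> ranking A (cell A x) block.
Proof.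
move=> block_onto p_level1; have xc := glue_compl; split => // i j.
- split.
  + apply: connect_invariant => a b; rewrite (graph1_cell hA a b xc).
    case/andP => _; rewrite ltr_norml => /andP[h1 h2].
    case: (ltngtP (block a) (block b)) => [ab|ba|/val_inj //].
    * by move: h1; rewrite ltrNl opprB => /(lt_trans (glue_gap ab)); rewrite ltxx.
    * by have := lt_trans (glue_gap ba) h2; rewrite ltxx.
  + move=> ij; have jD : j \in D (block i) by rewrite D_block ij.
    exact: glue_block_connect (exist _ i (block_mem i)) (exist _ j jD) (p_level1 _).
- move=> ij y xy; apply: cell_gt xy _ (head_in_A hA) (glue_gap ij).
  by apply: contraTneq ij => ->; rewrite ltnn.
Qed.

Lemma glue_restr u : cell A (p u) (restr (D := D u) x).
Proof.
have [xuc _] := restr_cell (D u) (cell_refl glue_compl).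
by split=> // s t st a aA; rewrite /restr glue_diff_block.
Qed.

End Glue.

Lemma phi_surjective (D : 'I_w -> {set 'I_n})
  (P : forall u : 'I_w, set (sub_idx (D u) -> R)) :
  ordered_set_partition D -> (forall u, is_region A (P u) /\ has_level (P u) 1) ->
  exists O : set ('I_n -> R), [/\ is_region A O, has_level O w & phi_rel A O D P].
Proof.
move=> /ordered_set_partition_index [block [block_onto D_block]] P_reg.
have cell_P u : exists p, arr_compl A p /\ P u = cell A p.
  by have [/region_cellP [p pc ->] _] := P_reg u; exists p.
pose p u := sval (cid (cell_P u)).
have p_compl u : arr_compl A (p u) by case: (svalP (cid (cell_P u))).
have Pp u : P u = cell A (p u) by case: (svalP (cid (cell_P u))).
pose K := \sum_u \sum_s `|p u s|.
have p_le_K u s : `|p u s| <= K.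
  rewrite /K (bigD1 u) //= (bigD1 s) //= -addrA lerDl.
  by rewrite addr_ge0 ?sumr_ge0 // => v _; exact: sumr_ge0.
pose L := K + K + a1 + 1.
have L_gap u v (s : sub_idx (D u)) (t : sub_idx (D v)) :
    `|p u s| + `|p v t| + a1 < L.
  by have := p_le_K u s; have := p_le_K v t; rewrite /L; lra.
have block_mem i : i \in D (block i) by rewrite D_block.
pose x i := p (block i) (exist _ i (block_mem i)) + L * (block i)%:R.
have x_blocks u (s : sub_idx (D u)) : x (val s) = p u s + L * u%:R.
  case: s => i iu; have e : block i = u by apply/eqP; rewrite -D_block.
  rewrite /x /=; move: (block_mem i); rewrite e => iu'.
  by rewrite (bool_irrelevance iu' iu).
have xc := glue_compl D_block p_compl L_gap x_blocks.
have p_level1 u : has_level (cell A (p u)) 1 by rewrite -Pp; case: (P_reg u).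
have x_rank := glue_ranking D_block p_compl L_gap x_blocks block_onto p_level1.
exists (cell A x); split.
- by apply/region_cellP; exists x.
- exact (ranking_has_level hA xc x_rank).
- split; first exact (ranking_ordered_components x_rank D_block).
  move=> y xy u; split; first by case: (P_reg u).
  rewrite Pp -(cell_eq (glue_restr D_block p_compl L_gap x_blocks u)).
  exact: restr_cell.
Qed.

End Phi.

Theorem lemma3p6 (R : realType) (A : seq R) (n w : nat)
  (hA : valid_A A) (hn : (1 <= n)%N) (hw : (1 <= w)%N) :
  (forall O : set ('I_n -> R), is_region A O -> has_level O w ->
     exists D : 'I_w -> {set 'I_n},
       ordered_components A O D /\
       (forall D' : 'I_w -> {set 'I_n}, ordered_components A O D' -> D' = D) /\
       exists P : forall u : 'I_w, set (sub_idx (D u) -> R),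
         phi_rel A O D P /\ forall u, has_level (P u) 1) /\
  (forall (O1 O2 : set ('I_n -> R)) (D : 'I_w -> {set 'I_n})
          (P : forall u : 'I_w, set (sub_idx (D u) -> R)),
     is_region A O1 -> has_level O1 w -> is_region A O2 -> has_level O2 w ->
     phi_rel A O1 D P -> phi_rel A O2 D P -> O1 = O2) /\
  (forall (D : 'I_w -> {set 'I_n}) (P : forall u : 'I_w, set (sub_idx (D u) -> R)),
     ordered_set_partition D ->
     (forall u, is_region A (P u) /\ has_level (P u) 1) ->
     exists O : set ('I_n -> R), [/\ is_region A O, has_level O w & phi_rel A O D P]).
Proof.
split; first exact: phi_well_defined.
split; last exact: phi_surjective.
by move=> O1 O2 D P O1_reg _ O2_reg _; exact: phi_injective.
Qed.
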